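(* Let $\mathcal{C}$ be a linear code over $R$ of type $(n;k,0,\dots,0)$, let $G$ be a generator matrix of $\mathcal{C}$ with rows $u_1,\dots,u_k$, and let $c\in\mathcal{C}$. If $c=\sum_{i=1}^k\alpha_iu_i$ with $\alpha_i\in R$, then $\nu(c)=\min\{\nu(\alpha_1),\dots,\nu(\alpha_k)\}$.
   Context: Let $R$ be a finite commutative chain ring with maximal ideal $\langle\gamma\rangle$ and nilpotency index $s$ (least $s$ with $\gamma^s=0$). A linear code of length $n$ is an $R$-submodule of $R^n$; it has type $(n;k,0,\dots,0)$ when it is a free $R$-module of rank $k$ (more generally type $(n;t_1,\dots,t_s)$ means isomorphic to $\bigoplus_{i=1}^s(R/\langle\gamma^{s-i+1}\rangle)^{t_i}$). Valuation: for $x\in R\setminus\{0\}$, $\nu(x)$ is the largest $m\in\{0,\dots,s-1\}$ with $x=\gamma^m\beta$ for a unit $\beta$; $\nu(0)=\infty$ (larger than every integer). For $x=(x_1,\dots,x_n)\in R^n$, $\nu(x)=\min_i\nu(x_i)$. *)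

From HB Require Import structures.
From mathcomp Require Import all_boot all_order all_algebra.
Set Implicit Arguments. Unset Strict Implicit. Unset Printing Implicit Defensive.
Import GRing.Theory.
Local Open Scope ring_scope.

(* Extended naturals N u {oo}: [None] stands for infinity (larger than every
   integer).  [omin] is the minimum on this set. *)
Definition omin (a b : option nat) : option nat :=
  match a, b with
  | None, y => y
  | x, None => x
  | Some m, Some n => Some (minn m n)
  end.

(* Chain ring hypotheses: R finite commutative, the non-units are exactly the
   ideal <gamma> (so <gamma> is the unique maximal ideal), and s is the
   nilpotency index of gamma. *)
Definition chain_ring (R : finComUnitRingType) (gamma : R) (s : nat) : Prop :=
  [/\ forall x : R, x \notin GRing.unit <-> exists y, x = gamma * y,
      gamma ^+ s = 0 &
      forall m, (m < s)%N -> gamma ^+ m != 0].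

Definition nu (R : finComUnitRingType) (gamma : R) (s : nat) (x : R)
  : option nat :=
  if x == 0 then None
  else Some (\max_(m < s | [exists b : R, (b \is a GRing.unit)
                                         && (x == gamma ^+ m * b)]) (m : nat)).

Definition nuv (R : finComUnitRingType) (gamma : R) (s n : nat)
  (x : 'rV[R]_n) : option nat :=
  \big[omin/None]_(i < n) nu gamma s (x 0 i).

(* C (a subset of R^n) is an R-module isomorphic to R^k, i.e. a linear code of
   type (n; k, 0, ..., 0): the image of an injective R-linear map R^k -> R^n. *)
Definition free_code_of_rank (R : finComUnitRingType) (n k : nat)
  (C : {pred 'rV[R]_n}) : Prop :=
  exists f : {linear 'rV[R]_k -> 'rV[R]_n},
    injective f /\ forall x, x \in C <-> exists a, x = f a.

Definition generator_matrix (R : finComUnitRingType) (n k : nat)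
  (C : {pred 'rV[R]_n}) (G : 'M[R]_(k, n)) : Prop :=
  forall x, x \in C <-> exists a : 'I_k -> R, x = \sum_(i < k) a i *: row i G.

From HB Require Import structures.
From mathcomp Require Import all_boot all_order all_algebra.
From mathcomp Require Import zify.
Import GRing.Theory.
Local Open Scope ring_scope.

(* In a chain ring, [m <= nu x] holds exactly when [gamma ^+ (s - m)] kills
   [x], and for a vector exactly when [gamma ^+ (s - m)] kills all its
   coordinates.  The rows of [G] are free: [a |-> a *m G] maps the finite set
   [R^k] onto [C], which has [#|R^k|] elements since [C] is also the image of
   an injective map.  Hence
   [gamma ^+ (s - m) *: c = (gamma ^+ (s - m) *: alpha) *m G] vanishes iff
   [gamma ^+ (s - m) *: alpha] does, so [c] and [alpha] have the same lower
   bounds for their valuations. *)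

Definition leqo (m : nat) (o : option nat) : bool :=
  if o is Some v then (m <= v)%N else true.

Lemma leqo_omin m a b : leqo m (omin a b) = leqo m a && leqo m b.
Proof. by case: a => [a|]; case: b => [b|] //=; rewrite ?andbT // leq_min. Qed.

Lemma leqo_bigomin m k (F : 'I_k -> option nat) :
  leqo m (\big[omin/None]_(i < k) F i) = [forall i, leqo m (F i)].
Proof.
rewrite (big_morph (leqo m) (leqo_omin m) (erefl : leqo m None = true)).
by rewrite big_andE.
Qed.

Lemma leqo_inj a b : (forall m, leqo m a = leqo m b) -> a = b.
Proof.
case: a => [a|]; case: b => [b|] // eq_ab.
- by have := eq_ab a; have := eq_ab b => /=; rewrite !leqnn => ? ?; congr Some; lia.
- by have := eq_ab a.+1; rewrite /= ltnn.
- by have := eq_ab b.+1; rewrite /= ltnn.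
Qed.

Lemma same_image_inj (T U : finType) (f g : T -> U) :
  (forall y, (exists a, y = f a) <-> (exists a, y = g a)) ->
  injective f -> injective g.
Proof.
move=> eq_im f_inj; have im_fg : [set f a | a in T] = [set g a | a in T].
  apply/setP => y; apply/imsetP/imsetP => -[a _ ->].
  - by have [|b ->] := proj1 (eq_im (f a)); [exists a | exists b].
  - by have [|b ->] := proj2 (eq_im (g a)); [exists a | exists b].
have /imset_injP g_inj : #|[set g a | a in T]| == #|T|.
  by rewrite -im_fg card_imset.
by move=> a b; apply: g_inj.
Qed.

Lemma generator_matrix_inj {R : finComUnitRingType} {n k}
    {C : {pred 'rV[R]_n}} {G : 'M[R]_(k, n)} :
  free_code_of_rank k C -> generator_matrix C G ->
  injective (fun a : 'rV[R]_k => a *m G).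
Proof.
move=> [f [f_inj f_im]] G_gen.
apply: (@same_image_inj _ _ f (fun a => a *m G) _ f_inj) => x.
apply: (iff_trans (iff_sym (f_im x))); apply: (iff_trans (G_gen x)); split=> -[a ->].
- by exists (\row_i a i); rewrite mulmx_sum_row; apply: eq_bigr => i _; rewrite mxE.
- by exists (fun i => a 0 i); rewrite mulmx_sum_row.
Qed.

Section ChainRing.

Variables (R : finComUnitRingType) (gamma : R) (s : nat).
Hypothesis chain : chain_ring gamma s.

Lemma expr_unit_eq0 j u :
  u \is a GRing.unit -> (gamma ^+ j * u == 0) = (s <= j)%N.
Proof.
have [_ gamma_s gamma_lt] := chain; move=> u_unit.
have [le_sj|lt_js] := leqP s j.
  by rewrite -(subnKC le_sj) exprD gamma_s !mul0r eqxx.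
by rewrite (mulIr_eq0 _ (mulIr u_unit)) (negbTE (gamma_lt _ lt_js)).
Qed.

Lemma chain_decomp {x : R} :
  x != 0 -> exists m : 'I_s, exists2 b, b \is a GRing.unit & x = gamma ^+ m * b.
Proof.
have [nonunit_dvd gamma_s _] := chain; move=> x_neq0.
pose factor_or_dvd j :=
  (exists m : 'I_s, exists2 b, b \is a GRing.unit & x = gamma ^+ m * b)
  \/ exists y, x = gamma ^+ j * y.
suff /(_ s (leqnn s)) [//|[y x_eq]] : forall j, (j <= s)%N -> factor_or_dvd j.
  by move: x_neq0; rewrite x_eq gamma_s mul0r eqxx.
elim=> [|j IHj] le_js; first by right; exists x; rewrite mul1r.
have [//|[y x_eq]] := IHj (ltnW le_js); first by left.
have [y_unit|/nonunit_dvd [z y_eq]] := boolP (y \is a GRing.unit).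
  by left; exists (Ordinal le_js), y.
by right; exists z; rewrite x_eq y_eq mulrA -exprSr.
Qed.

Lemma nu_factor {x : R} :
  x != 0 -> exists (m : 'I_s) b,
    [/\ b \is a GRing.unit, x = gamma ^+ m * b & nu gamma s x = Some (m : nat)].
Proof.
move=> x_neq0; rewrite /nu (negbTE x_neq0).
set P := [pred m : 'I_s | [exists b, (b \is a GRing.unit) && (x == gamma ^+ m * b)]].
have [m Pm ->] : {m | m \in P & \max_(i in P) i = m :> nat}.
  apply: eq_bigmax_cond; have [m [b b_unit x_eq]] := chain_decomp x_neq0.
  by apply/card_gt0P; exists m; apply/existsP; exists b; rewrite b_unit x_eq eqxx.
by have /existsP [b /andP [b_unit /eqP x_eq]] := Pm; exists m, b.
Qed.

Lemma leqo_nu m x : leqo m (nu gamma s x) = (gamma ^+ (s - m) * x == 0).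
Proof.
have [->|x_neq0] := eqVneq x 0; first by rewrite /nu eqxx mulr0 eqxx.
have [v [b [b_unit -> ->]]] := nu_factor x_neq0.
by rewrite mulrA -exprD expr_unit_eq0 //=; have := ltn_ord v; lia.
Qed.

Lemma leqo_nuv n m (x : 'rV[R]_n) :
  leqo m (nuv gamma s x) = (gamma ^+ (s - m) *: x == 0).
Proof.
rewrite leqo_bigomin; apply/forallP/eqP => [x_ann | x_ann i].
  by apply/rowP => i; rewrite !mxE; apply/eqP; rewrite -leqo_nu.
by have := congr1 (fun y : 'rV_n => y 0 i) x_ann; rewrite /= !mxE leqo_nu => ->.
Qed.

End ChainRing.

Arguments leqo_nuv {R gamma s} chain {n} m x.

Theorem lemma3p8 (R : finComUnitRingType) (gamma : R) (s n k : nat)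
  (C : {pred 'rV[R]_n}) (G : 'M[R]_(k, n)) (c : 'rV[R]_n) (alpha : 'I_k -> R) :
  chain_ring gamma s ->
  free_code_of_rank k C ->
  generator_matrix C G ->
  c \in C ->
  c = \sum_(i < k) alpha i *: row i G ->
  nuv gamma s c = \big[omin/None]_(i < k) nu gamma s (alpha i).
Proof.
move=> chain C_free G_gen _ c_eq.
pose a := \row_i alpha i.
have c_aG : c = a *m G.
  by rewrite c_eq mulmx_sum_row; apply: eq_bigr => i _; rewrite mxE.
have -> : \big[omin/None]_(i < k) nu gamma s (alpha i) = nuv gamma s a.
  by apply: eq_bigr => i _; rewrite mxE.
apply: leqo_inj => m; rewrite !(leqo_nuv chain) c_aG scalemxAl.
by rewrite -(mul0mx _ G) (inj_eq (generator_matrix_inj C_free G_gen)).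
Qed.
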